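(* Let $n\ge 3$, $u>0$, and let $S=[A_0,\dots,A_n]$ be an $n$-simplex with $\|A_i-A_0\|^2=v_i$ for $1\le i\le n$ and $\|A_i-A_j\|^2=u$ for $1\le i<j\le n$ (denoted $PK[n;u;v_1,\dots,v_n]$). Then its Cayley–Menger determinant is $$\mathcal{C}(S)=(-u)^{n-2}\Big[n(u^2+v_1^2+\cdots+v_n^2)-(u+v_1+\cdots+v_n)^2\Big],$$ and its inner Cayley–Menger determinant is $$\mathcal{D}(S)=(-u)^{n-1}\Big[(n-1)(v_1^2+\cdots+v_n^2)-(v_1+\cdots+v_n)^2\Big].$$
   Context: An $n$-simplex is the convex hull $[A_0,\dots,A_n]$ of $n+1$ affinely independent points in a Euclidean space. With $a_{i,j}=\|A_i-A_j\|^2$, the Cayley–Menger determinant $\mathcal{C}(S)$ is the $(n+2)\times(n+2)$ determinant with rows and columns indexed by $-1,0,\dots,n$, whose entries are $c_{i,i}=0$, $c_{-1,j}=c_{j,-1}=1$ for $j\ne -1$, and $c_{i,j}=a_{i,j}$ otherwise. The inner Cayley–Menger determinant $\mathcal{D}(S)$ is the $(n+1)\times(n+1)$ determinant $\det(a_{i,j})_{0\le i,j\le n}$ (i.e. $\mathcal{C}(S)$ with its first row and first column deleted). *)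

From HB Require Import structures.
From mathcomp Require Import all_boot all_order all_algebra.
Set Implicit Arguments. Unset Strict Implicit. Unset Printing Implicit Defensive.
Import Order.TTheory GRing.Theory Num.Theory.
Local Open Scope ring_scope.

Definition sqdist (R : realFieldType) (m : nat) (x y : 'rV[R]_m) : R :=
  \sum_(k < m) (x 0 k - y 0 k) ^+ 2.

Definition affinely_independent (R : realFieldType) (m n : nat)
  (A : 'I_n.+1 -> 'rV[R]_m) : bool :=
  row_free (\matrix_(i < n) (A (lift ord0 i) - A ord0)).

(* Cayley-Menger matrix: rows/columns indexed by -1,0,...,n, where index
   ord0 of 'I_(n.+2) plays the role of -1 and lift ord0 k plays k. *)
Definition cm_matrix (R : realFieldType) (m n : nat) (A : 'I_n.+1 -> 'rV[R]_m)
  : 'M[R]_(n.+2) :=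
  \matrix_(i, j)
    if i == j then 0 else
    match unlift ord0 i, unlift ord0 j with
    | Some i', Some j' => sqdist (A i') (A j')
    | _, _ => 1
    end.

Definition cayley_menger (R : realFieldType) (m n : nat) (A : 'I_n.+1 -> 'rV[R]_m) : R :=
  \det (cm_matrix A).

Definition inner_cayley_menger (R : realFieldType) (m n : nat) (A : 'I_n.+1 -> 'rV[R]_m) : R :=
  \det (\matrix_(i, j) sqdist (A i) (A j) : 'M[R]_(n.+1)).

From HB Require Import structures.
From mathcomp Require Import all_boot all_order all_algebra.
From mathcomp Require Import ring.
Set Implicit Arguments. Unset Strict Implicit. Unset Printing Implicit Defensive.
Import Order.TTheory GRing.Theory Num.Theory.
Local Open Scope ring_scope.

(* Adding u I to the matrix (a_{i,j}) leaves u e_0 e_0^T + u 1' 1'^T + e_0 w^T + w e_0^T,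
   where 1' is the indicator of the vertices A_1, ..., A_n and w = (0, v_1, ..., v_n):
   the matrix is -u I + X Y with X of width 3, and bordering it as in C(S) raises the
   width to 4. Sylvester's identity det (1 + X Y) = det (1 + Y X) gives
   det (c I_N + X Y) = c^(N-k) det (c I_k + Y X), and the k x k matrix Y X only involves
   u, n, the sum of the v_i and the sum of their squares. *)

Lemma det1D_mulmxC (R : comPzRingType) N k (X : 'M[R]_(N, k)) (Y : 'M[R]_(k, N)) :
  \det (1%:M + X *m Y) = \det (1%:M + Y *m X).
Proof.
pose M := block_mx 1%:M (- X) Y 1%:M.
have ML : block_mx 1%:M 0 (- Y) 1%:M *m M = block_mx 1%:M (- X) 0 (1%:M + Y *m X).
  by rewrite mulmx_block !mul1mx !mul0mx !mulmx1 !addr0 addNr mulNmx mulmxN opprK addrC.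
have MR : M *m block_mx 1%:M 0 (- Y) 1%:M = block_mx (1%:M + X *m Y) (- X) 0 1%:M.
  by rewrite mulmx_block !mulmx1 !mulmx0 !add0r mul1mx mulNmx mulmxN opprK addrN.
have detL : \det (block_mx 1%:M 0 (- Y) 1%:M) = 1 by rewrite det_lblock !det1 mulr1.
have := congr1 determinant ML; rewrite det_mulmx detL mul1r det_ublock det1 mul1r => <-.
by have := congr1 determinant MR; rewrite det_mulmx detL mulr1 det_ublock det1 mulr1.
Qed.

Lemma det_mx33 (R : comPzRingType) (M : 'M[R]_3) :
  \det M = M 0 0 * (M 1 1 * M 2 2 - M 1 2 * M 2 1)
         - M 0 1 * (M 1 0 * M 2 2 - M 1 2 * M 2 0)
         + M 0 2 * (M 1 0 * M 2 1 - M 1 1 * M 2 0).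
Proof.
rewrite (expand_det_row _ 0) !big_ord_recl big_ord0 /cofactor.
rewrite !(expand_det_row _ 0) !big_ord_recl !big_ord0 /cofactor !det_mx11 !mxE.
pose F (i j : nat) := M (inord i) (inord j).
have E i j : M i j = F i j by rewrite /F !inord_val.
rewrite !E /= /bump /=; clearbody F.
ring.
Qed.

Lemma det_scalarD_mulmx (F : fieldType) N k (c : F) (X : 'M[F]_(N, k)) Y :
  (k <= N)%N -> c != 0 ->
  \det (c%:M + X *m Y) = c ^+ (N - k) * \det (c%:M + Y *m X).
Proof.
move=> le_kN c_neq0.
have scaleE p (A : 'M[F]_p) : c%:M + A = c *: (1%:M + c^-1 *: A).
  by rewrite scalerDr scalemx1 scalerA divff // scale1r.
rewrite !scaleE !detZ scalemxAl scalemxAr det1D_mulmxC.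
by rewrite mulrA -exprD subnK.
Qed.

Section PKSimplex.
Variable R : fieldType.

Definition delta0 {N} (r : 'I_N.+1) : R := (r == ord0)%:R.

Definition ext0 N (f : 'I_N -> R) (r : 'I_N.+1) : R :=
  if unlift ord0 r is Some i then f i else 0.

Lemma lift0_eq0 N (i : 'I_N) : (lift ord0 i == ord0) = false.
Proof. by rewrite eq_sym (negbTE (neq_lift _ _)). Qed.

Lemma delta0_ord0 N : delta0 (ord0 : 'I_N.+1) = 1.
Proof. by rewrite /delta0 eqxx. Qed.

Lemma delta0_lift N (i : 'I_N) : delta0 (lift ord0 i) = 0.
Proof. by rewrite /delta0 lift0_eq0. Qed.

Lemma ext0_ord0 N (f : 'I_N -> R) : ext0 f ord0 = 0.
Proof. by rewrite /ext0 unlift_none. Qed.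

Lemma ext0_lift N (f : 'I_N -> R) i : ext0 f (lift ord0 i) = f i.
Proof. by rewrite /ext0 liftK. Qed.

Definition cm_border N (D : 'M[R]_N) : 'M[R]_N.+1 :=
  \matrix_(i, j)
    if i == j then 0 else
    match unlift ord0 i, unlift ord0 j with
    | Some i', Some j' => D i' j'
    | _, _ => 1
    end.

Variables (n : nat) (u : R) (v : 'I_n -> R).
Local Notation sv := (\sum_(i < n) v i).
Local Notation sq := (\sum_(i < n) v i ^+ 2).

Definition pk_sqdist_mx : 'M[R]_n.+1 :=
  \matrix_(i, j)
    match unlift ord0 i, unlift ord0 j with
    | Some i', Some j' => if i' == j' then 0 else u
    | Some i', None => v i'
    | None, Some j' => v j'
    | None, None => 0
    end.

Definition pk_lfactor : 'M[R]_(n.+1, 3) :=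
  \matrix_(r, l) [:: delta0 r; ext0 (fun=> 1) r; ext0 v r]`_l.

Definition pk_rfactor : 'M[R]_(3, n.+1) :=
  \matrix_(l, r) [:: u * delta0 r + ext0 v r; u * ext0 (fun=> 1) r; delta0 r]`_l.

Lemma pk_sqdist_mx_factor : pk_sqdist_mx = (- u)%:M + pk_lfactor *m pk_rfactor.
Proof.
apply/matrixP => r s; rewrite !mxE !big_ord_recl big_ord0 !mxE /=.
case: (unliftP ord0 r) => [i|] ->; case: (unliftP ord0 s) => [j|] ->;
  rewrite ?(liftK, unlift_none, delta0_ord0, delta0_lift, ext0_ord0, ext0_lift,
            inj_eq lift_inj, lift0_eq0, negbTE (neq_lift _ _), eqxx) //=;
  try case: (i == j); rewrite /=; ring.
Qed.

Lemma pk_rfactor_mul_lfactor :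
  pk_rfactor *m pk_lfactor =
  \matrix_(l, m) (nth [::] [:: [:: u; sv; sq]; [:: 0; n%:R * u; u * sv]; [:: 1; 0; 0]] l)`_m.
Proof.
apply/matrixP => l m; rewrite !mxE big_ord_recl !mxE.
under eq_bigr => i _ do rewrite ?(mxE, delta0_lift, ext0_lift).
rewrite ?(delta0_ord0, ext0_ord0).
case: l => [[|[|[|l]]] hl] //; case: m => [[|[|[|m]]] hm] //=.
all: under eq_bigr => i _ do rewrite ?(mulr0, mul0r, mulr1, mul1r, add0r, addr0).
all: rewrite ?big1_eq ?(mulr0, mul0r, mulr1, mul1r, add0r, addr0) //.
- by rewrite sumr_const card_ord mulr_natl.
- by rewrite mulr_sumr.
Qed.

Lemma det_pk_sqdist_mx : (2 <= n)%N -> u != 0 ->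
  \det pk_sqdist_mx = (- u) ^+ (n - 1) * ((n - 1)%:R * sq - sv ^+ 2).
Proof.
move=> n_ge2 u_neq0.
rewrite pk_sqdist_mx_factor det_scalarD_mulmx ?oppr_eq0 // pk_rfactor_mul_lfactor.
rewrite det_mx33 !mxE /=.
rewrite natrB ?(ltnW n_ge2) // subSS (_ : (n - 1 = (n - 2).+1)%N) ?exprS; first ring.
by rewrite -subSn.
Qed.

Definition cm_lfactor : 'M[R]_(n.+2, 4) :=
  \matrix_(r, l)
    [:: delta0 r; ext0 delta0 r; ext0 (ext0 (fun=> 1)) r; ext0 (ext0 v) r]`_l.

Definition cm_rfactor : 'M[R]_(4, n.+2) :=
  \matrix_(l, r)
    [:: u * delta0 r + ext0 delta0 r + ext0 (ext0 (fun=> 1)) r;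
        delta0 r + u * ext0 delta0 r + ext0 (ext0 v) r;
        delta0 r + u * ext0 (ext0 (fun=> 1)) r;
        ext0 delta0 r]`_l.

Lemma cm_border_pk_factor :
  cm_border pk_sqdist_mx = (- u)%:M + cm_lfactor *m cm_rfactor.
Proof.
apply/matrixP => r s; rewrite !mxE !big_ord_recl big_ord0 !mxE /=.
case: (unliftP ord0 r) => [r'|] ->; [case: (unliftP ord0 r') => [i|] -> |];
case: (unliftP ord0 s) => [s'|] ->; try case: (unliftP ord0 s') => [j|] ->;
  rewrite ?(mxE, liftK, unlift_none, delta0_ord0, delta0_lift, ext0_ord0, ext0_lift,
            inj_eq lift_inj, lift0_eq0, negbTE (neq_lift _ _), eqxx) //=;
  try case: (i == j); rewrite /=; ring.
Qed.

Lemma cm_rfactor_mul_lfactor :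
  cm_rfactor *m cm_lfactor =
  \matrix_(l, m) (nth [::] [:: [:: u; 1; n%:R; sv]; [:: 1; u; sv; sq];
                              [:: 1; 0; n%:R * u; u * sv]; [:: 0; 1; 0; 0]] l)`_m.
Proof.
apply/matrixP => l m; rewrite !mxE !big_ord_recl !mxE.
under eq_bigr => i _ do rewrite ?(mxE, delta0_lift, ext0_lift).
rewrite ?(delta0_ord0, delta0_lift, ext0_ord0, ext0_lift).
case: l => [[|[|[|[|l]]]] hl] //; case: m => [[|[|[|[|m]]]] hm] //=.
all: under eq_bigr => i _ do rewrite ?(mulr0, mul0r, mulr1, mul1r, add0r, addr0).
all: rewrite ?big1_eq ?(mulr0, mul0r, mulr1, mul1r, add0r, addr0) //.
- by rewrite sumr_const card_ord.
- by rewrite sumr_const card_ord mulr_natl.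
- by rewrite mulr_sumr.
Qed.

Lemma det_cm_border_pk : (2 <= n)%N -> u != 0 ->
  \det (cm_border pk_sqdist_mx) =
  (- u) ^+ (n - 2) * (n%:R * (u ^+ 2 + sq) - (u + sv) ^+ 2).
Proof.
move=> n_ge2 u_neq0.
rewrite cm_border_pk_factor det_scalarD_mulmx ?oppr_eq0 // cm_rfactor_mul_lfactor.
rewrite (expand_det_row _ 0) !big_ord_recl big_ord0 /cofactor !det_mx33 !mxE.
rewrite /= /bump /= !subSS; ring.
Qed.

End PKSimplex.

Section SquaredDistances.
Variables (R : realFieldType) (m : nat).

Lemma sqdistxx (x : 'rV[R]_m) : sqdist x x = 0.
Proof. by rewrite /sqdist big1 // => k _; rewrite subrr expr0n. Qed.

Lemma sqdistC (x y : 'rV[R]_m) : sqdist x y = sqdist y x.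
Proof. by apply: eq_bigr => k _; rewrite -sqrrN opprB. Qed.

Lemma cm_matrixE n (A : 'I_n.+1 -> 'rV[R]_m) :
  cm_matrix A = cm_border (\matrix_(i, j) sqdist (A i) (A j)).
Proof.
apply/matrixP => i j; rewrite !mxE.
case: (i == j) => //.
by case: (unlift ord0 i) => // i'; case: (unlift ord0 j) => // j'; rewrite mxE.
Qed.

Lemma sqdist_mx_pk n (u : R) (v : 'I_n -> R) (A : 'I_n.+1 -> 'rV[R]_m) :
  (forall i : 'I_n, sqdist (A (lift ord0 i)) (A ord0) = v i) ->
  (forall i j : 'I_n, (i < j)%N -> sqdist (A (lift ord0 i)) (A (lift ord0 j)) = u) ->
  \matrix_(i, j) sqdist (A i) (A j) = pk_sqdist_mx u v.
Proof.
move=> hv hu; apply/matrixP => r s; rewrite !mxE.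
case: (unliftP ord0 r) => [i|] ->; case: (unliftP ord0 s) => [j|] ->;
  rewrite ?liftK ?unlift_none.
- have [<-|] := eqVneq i j; first exact: sqdistxx.
  by rewrite neq_ltn => /orP[] lt; [|rewrite sqdistC]; apply: hu.
- exact: hv.
- by rewrite sqdistC hv.
- exact: sqdistxx.
Qed.
End SquaredDistances.

Theorem theorem4p1 (R : realFieldType) (m n : nat) (u : R) (v : 'I_n -> R)
  (A : 'I_n.+1 -> 'rV[R]_m) :
  (3 <= n)%N -> 0 < u ->
  affinely_independent A ->
  (forall i : 'I_n, sqdist (A (lift ord0 i)) (A ord0) = v i) ->
  (forall i j : 'I_n, (i < j)%N -> sqdist (A (lift ord0 i)) (A (lift ord0 j)) = u) ->
  cayley_menger A =
    (- u) ^+ (n - 2) *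
      (n%:R * (u ^+ 2 + \sum_(i < n) v i ^+ 2) - (u + \sum_(i < n) v i) ^+ 2)
  /\
  inner_cayley_menger A =
    (- u) ^+ (n - 1) *
      ((n - 1)%:R * (\sum_(i < n) v i ^+ 2) - (\sum_(i < n) v i) ^+ 2).
Proof.
move=> n_ge3 u_gt0 _ hv hu.
have n_ge2 : (2 <= n)%N := ltnW n_ge3.
have u_neq0 : u != 0 := lt0r_neq0 u_gt0.
rewrite /cayley_menger /inner_cayley_menger cm_matrixE (sqdist_mx_pk hv hu).
by split; [apply: det_cm_border_pk | apply: det_pk_sqdist_mx].
Qed.
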